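(* Let $(X,\mu)$ be a Lebesgue space with a continuous probability measure $\mu$, and let $\rho$ be a semimetric on $X$, measurable as a function on $(X\times X,\mu\times\mu)$, which satisfies the ultrametric inequality $\rho(x,z)\le\max(\rho(x,y),\rho(y,z))$ for $(\mu\times\mu\times\mu)$-almost all triples $(x,y,z)\in X^3$. Then there exists an ultrametric $\tilde\rho$ on $X$ which coincides with $\rho$ for $(\mu\times\mu)$-almost all pairs and satisfies $\tilde\rho(x,z)\le\max(\tilde\rho(x,y),\tilde\rho(y,z))$ for all triples $x,y,z\in X$.
   Context: A semimetric is a non-negative symmetric function on $X\times X$ satisfying the triangle inequality and vanishing on the diagonal (it may vanish off the diagonal). *)

From HB Require Import structures.
From mathcomp Require Import all_boot all_order all_algebra.
From mathcomp Require Import all_classical all_reals all_analysis.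
Set Implicit Arguments. Unset Strict Implicit. Unset Printing Implicit Defensive.
Import Order.TTheory GRing.Theory Num.Theory.
Local Open Scope classical_set_scope.
Local Open Scope ring_scope.

(* (X, mu) is a Lebesgue space with continuous (non-atomic) probability
   measure: it is isomorphic mod 0 to ([0,1], Lebesgue measure). *)
Definition continuous_lebesgue_space (d : measure_display) (X : measurableType d)
    (R : realType) (mu : {measure set X -> \bar R}) : Prop :=
  exists (f : X -> R) (g : R -> X),
    [/\ measurable_fun setT f,
        measurable_fun setT g,
        (forall A : set R, measurable A ->
           mu (f @^-1` A) = (@lebesgue_measure R) (A `&` `[0%R, 1%R]%classic)),
        {ae mu, forall x, g (f x) = x} &
        {ae (@lebesgue_measure R), forall t, `[0%R, 1%R]%classic t -> f (g t) = t}].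

Definition semimetric (X : Type) (R : realType) (rho : X -> X -> R) : Prop :=
  [/\ forall x y, 0 <= rho x y,
      forall x y, rho x y = rho y x,
      forall x, rho x x = 0 &
      forall x y z, rho x z <= rho x y + rho y z].

Definition ultrametric (X : Type) (R : realType) (rho : X -> X -> R) : Prop :=
  semimetric rho /\ forall x y z, rho x z <= Num.max (rho x y) (rho y z).

(* measurability of a function with respect to a measure space (i.e. w.r.t.
   the mu-completion of the sigma-algebra): it agrees with a measurable
   function outside a mu-negligible set. *)
Definition measurable_wrt (d : measure_display) (T : measurableType d)
    (R : realType) (mu : {measure set T -> \bar R}) (h : T -> R) : Prop :=
  exists h' : T -> R, measurable_fun setT h' /\ {ae mu, forall t, h t = h' t}.

(* Replace rho by a measurable version g.  For a level s, the balls
   B_s(x) = [set y | g (x, y) <= s] define an equivalence relation x ~_s z on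
   all of X: either x = z, or B_s(x) and B_s(z) agree up to a null set and
   meet in a non-null set.  Applying Fubini to the almost-everywhere ultrametric
   inequality shows that for almost every pair, rho x z <= s iff x ~_s z.
   Since every ~_q is an equivalence relation, the distance
   inf {r >= 0 | x ~_q z for all rationals q >= r} satisfies the ultrametric
   inequality wherever it is finite, and it agrees with rho almost everywhere
   because only countably many levels are involved.  For almost every x0 it is
   finite from x0 to almost every point; moving the remaining null set of
   points onto x0 makes it finite, hence an ultrametric, everywhere. *)

From HB Require Import structures.
From mathcomp Require Import all_boot all_order all_algebra.
From mathcomp Require Import all_classical all_reals all_analysis.
From mathcomp Require Import measurable_realfun.
Set Implicit Arguments. Unset Strict Implicit. Unset Printing Implicit Defensive.
Import Order.TTheory GRing.Theory Num.Theory.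
Local Open Scope classical_set_scope.
Local Open Scope ring_scope.

Lemma ultrametric_of_max_le (X : Type) (R : realType) (rho : X -> X -> R) :
  (forall x y, 0 <= rho x y) -> (forall x y, rho x y = rho y x) ->
  (forall x, rho x x = 0) ->
  (forall x y z, rho x z <= Num.max (rho x y) (rho y z)) -> ultrametric rho.
Proof.
move=> ge0 sym diag ultra; split=> //; split=> // x y z.
apply: le_trans (ultra x y z) _.
by rewrite ge_max lerDl lerDr !ge0.
Qed.

Section real_inf.
Variable R : realType.

Lemma inf_setge (c : R) : inf [set r | c <= r] = c.
Proof.
apply/eqP; rewrite eq_le ge_inf //=; last by exists c.
by rewrite lb_le_inf //; exists c => /=.
Qed.

Lemma inf_le_max (S1 S2 S3 : set R) : has_inf S1 -> has_inf S2 -> has_lbound S3 ->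
  (forall r1 r2, S1 r1 -> S2 r2 -> S3 (Num.max r1 r2)) ->
  inf S3 <= Num.max (inf S1) (inf S2).
Proof.
move=> inf1 inf2 lb3 S12; apply/ler_addgt0Pr => e e0.
have [r1 S1r1 lt1] := inf_adherent e0 inf1.
have [r2 S2r2 lt2] := inf_adherent e0 inf2.
apply: le_trans (ge_inf lb3 (S12 _ _ S1r1 S2r2)) _.
rewrite ge_max; apply/andP; split.
- by apply: le_trans (ltW lt1) _; rewrite lerD2r le_max lexx.
- by apply: le_trans (ltW lt2) _; rewrite lerD2r le_max lexx orbT.
Qed.

End real_inf.

Section level_distance.
Variables (T : Type) (R : realType) (E : R -> T -> T -> Prop).
Hypothesis E_refl : forall s x, E s x x.
Hypothesis E_sym : forall s x y, E s x y -> E s y x.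
Hypothesis E_trans : forall s x y z, E s x y -> E s y z -> E s x z.

(* Only rational levels enter, so that identifying [level_dist] almost
   everywhere costs countably many null sets. *)
Definition level_set (x z : T) :=
  [set r : R | 0 <= r /\ forall q : rat, r <= ratr q -> E (ratr q) x z].

(* Points at infinite distance get the junk value [inf set0 = 0]. *)
Definition level_dist (x z : T) : R := inf (level_set x z).

Lemma level_set_lbound x z : has_lbound (level_set x z).
Proof. by exists 0 => r []. Qed.

Lemma level_setC x z : level_set x z = level_set z x.
Proof.
by apply/seteqP; split=> r [r0 Er]; split=> // q /Er; apply: E_sym.
Qed.

Lemma level_set_max x y z r1 r2 : level_set x y r1 -> level_set y z r2 ->
  level_set x z (Num.max r1 r2).
Proof.
move=> [r10 E1] [r20 E2]; split=> [|q]; first by rewrite le_max r10.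
by rewrite ge_max => /andP[/E1 Exy /E2 Eyz]; exact: E_trans Exy Eyz.
Qed.

Lemma level_set_eq x z (c : R) : 0 <= c ->
    (forall q : rat, 0 <= ratr q :> R -> (c <= ratr q <-> E (ratr q) x z)) ->
  level_set x z = [set r | c <= r].
Proof.
move=> c0 cE; apply/seteqP; split=> r /=.
- move=> [r0 Er]; rewrite leNgt; apply/negP => /rat_in_itvoo[q].
  rewrite in_itv /= => /andP[rq qc].
  have /cE : E (ratr q) x z by apply: Er; apply: ltW.
  by move=> /(_ (le_trans r0 (ltW rq))); rewrite leNgt qc.
- move=> cr; split=> [|q rq]; first exact: le_trans cr.
  by apply/cE; apply: le_trans rq; apply: le_trans cr.
Qed.

Lemma level_dist_eq x z (c : R) : 0 <= c ->
    (forall q : rat, 0 <= ratr q :> R -> (c <= ratr q <-> E (ratr q) x z)) ->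
  level_dist x z = c.
Proof. by move=> c0 cE; rewrite /level_dist (level_set_eq c0 cE) inf_setge. Qed.

Lemma level_set_refl x : level_set x x = [set r | 0 <= r].
Proof. by apply: level_set_eq => // q _; split. Qed.

Lemma level_dist_ge0 x z : 0 <= level_dist x z.
Proof.
have [[r Sr]|S0] := pselect (level_set x z !=set0).
  by apply: lb_le_inf; [exists r | move=> ? []].
rewrite /level_dist (_ : level_set x z = set0) ?inf0 //.
by apply/seteqP; split=> // r Sr; apply: S0; exists r.
Qed.

Lemma level_distC x z : level_dist x z = level_dist z x.
Proof. by rewrite /level_dist level_setC. Qed.

Lemma level_dist_xx x : level_dist x x = 0.
Proof. by rewrite /level_dist level_set_refl inf_setge. Qed.

Lemma level_dist_max x y z : level_set x y !=set0 -> level_set y z !=set0 ->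
  level_dist x z <= Num.max (level_dist x y) (level_dist y z).
Proof.
move=> ne1 ne2; apply: inf_le_max; last exact: level_set_max.
- by split=> //; exact: level_set_lbound.
- by split=> //; exact: level_set_lbound.
- exact: level_set_lbound.
Qed.

Lemma ultrametric_level_dist_retract x0 (pi : T -> T) :
    (forall y, level_set x0 (pi y) !=set0) ->
  ultrametric (fun x z => level_dist (pi x) (pi z)).
Proof.
have ne x y : level_set x0 (pi x) !=set0 -> level_set x0 (pi y) !=set0 ->
    level_set (pi x) (pi y) !=set0.
  rewrite level_setC => -[r1 S1] [r2 S2].
  by exists (Num.max r1 r2); apply: level_set_max S1 S2.
move=> ne0; apply: ultrametric_of_max_le => [x y|x y|x|x y z].
- exact: level_dist_ge0.
- exact: level_distC.
- exact: level_dist_xx.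
- by apply: level_dist_max; apply: ne.
Qed.

Lemma exists_level_dist_retract x0 : exists2 pi : T -> T,
  forall y, level_set x0 y !=set0 -> pi y = y &
  ultrametric (fun x z => level_dist (pi x) (pi z)).
Proof.
pose pi y := if pselect (level_set x0 y !=set0) then y else x0.
exists pi => [y x0y|].
  by rewrite /pi; case: pselect => // /(_ x0y).
apply: (ultrametric_level_dist_retract (x0 := x0)) => y.
by rewrite /pi; case: pselect => //= _; exists 0; rewrite level_set_refl /=.
Qed.

End level_distance.

Section product_ae.
Local Open Scope ereal_scope.
Context d1 d2 (T1 : measurableType d1) (T2 : measurableType d2) (R : realType).
Variable m1 : {measure set T1 -> \bar R}.
Variable m2 : {sigma_finite_measure set T2 -> \bar R}.

Lemma ae_prod_xsection (P : T1 * T2 -> Prop) :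
  {ae m1 \x m2, forall p, P p} -> {ae m1, forall x, {ae m2, forall y, P (x, y)}}.
Proof.
move=> [N [mN N0 PN]].
have : \int[m1]_x `|m2 (xsection N x)| = 0.
  rewrite -N0; apply: eq_integral => x _.
  by rewrite gee0_abs // measure_ge0.
move=> /(ae_eq_integral_abs _ measurableT (measurable_fun_xsection m2 mN)).
apply: filterS => x /(_ I) Nx0; exists (xsection N x); split=> //.
- exact: measurable_xsection.
- by move=> y /= nPy; rewrite /xsection /= inE; apply: PN.
Qed.

Lemma ae_prod_fst (P : T1 -> Prop) :
  {ae m1, forall x, P x} -> {ae m1 \x m2, forall p, P p.1}.
Proof.
move=> [N [mN N0 PN]]; exists (N `*` setT); split.
- exact: measurableX.
- by rewrite product_measure1E // N0 mul0e.
- by move=> [x y] /= /PN.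
Qed.

Lemma ae_prod_snd (P : T2 -> Prop) :
  {ae m2, forall y, P y} -> {ae m1 \x m2, forall p, P p.2}.
Proof.
move=> [N [mN N0 PN]]; exists (setT `*` N); split.
- exact: measurableX.
- by rewrite product_measure1E // N0 mule0.
- by move=> [x y] /= /PN.
Qed.

End product_ae.

Lemma ae_preimage d1 d2 (T1 : measurableType d1) (T2 : measurableType d2)
    (R : realType) (m1 : {measure set T1 -> \bar R})
    (m2 : {measure set T2 -> \bar R}) (f : T1 -> T2) (P : T2 -> Prop) :
  measurable_fun setT f ->
  (forall A, measurable A -> m1 (f @^-1` A) = m2 A) ->
  {ae m2, forall y, P y} -> {ae m1, forall x, P (f x)}.
Proof.
move=> mf fm [N [mN N0 PN]]; exists (f @^-1` N); split.
- by rewrite -[_ @^-1` _]setTI; apply: mf.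
- by rewrite fm.
- by move=> x /= /PN.
Qed.

Lemma ae_forall_countable d (T : measurableType d) (R : realType)
    (m : {measure set T -> \bar R}) (I : countType) (P : I -> T -> Prop) :
  (forall i, {ae m, forall x, P i x}) -> {ae m, forall x, forall i, P i x}.
Proof.
move=> Pae; pose Q n x := forall i, pickle i = n -> P i x.
have : {ae m, forall x, forall n, Q n x}.
  apply: (@ae_foralln d T R m Q) => n.
  have [[i ni]|nP] := pselect (exists i : I, pickle i = n).
    by apply: filterS (Pae i) => x Pix j; rewrite -ni => /(pcan_inj pickleK) ->.
  by apply: aeW => x i ni; exfalso; apply: nP; exists i.
by apply: filterS => x Qx i; exact: Qx _ i erefl.
Qed.

Section triple_product.
Local Open Scope ereal_scope.
Context d (X : measurableType d) (R : realType) (mu : probability X R).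
Local Notation P3 := ((mu \x mu) \x mu).

Definition swap12 (t : (X * X) * X) := ((t.1.2, t.1.1), t.2).
Definition swap23 (t : (X * X) * X) := ((t.1.1, t.2), t.1.2).

Lemma measurable_swap12 : measurable_fun setT swap12.
Proof.
apply: measurable_fun_pair; last exact: measurable_snd.
apply: measurable_fun_pair.
- exact: measurableT_comp measurable_snd measurable_fst.
- exact: measurableT_comp measurable_fst measurable_fst.
Qed.

Lemma measurable_swap23 : measurable_fun setT swap23.
Proof.
apply: measurable_fun_pair; last exact: measurableT_comp measurable_snd measurable_fst.
apply: measurable_fun_pair; last exact: measurable_snd.
exact: measurableT_comp measurable_fst measurable_fst.
Qed.

Let measure_prod3E (A : set ((X * X) * X)) : measurable A ->
  P3 A = \int[mu]_x \int[mu]_y mu (xsection A (x, y)).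
Proof.
move=> mA; rewrite [LHS](fubini_tonelli1 (mu \o xsection A)) //.
exact: measurable_fun_xsection.
Qed.

Let measure_xsection_indic (A : set ((X * X) * X)) p : measurable A ->
  mu (xsection A p) = \int[mu]_z (\1_A (p, z))%:E.
Proof.
move=> mA; rewrite -[xsection A p]setIT -integral_indic //; last exact: measurable_xsection.
by apply: eq_integral => z _; rewrite !indicE mem_xsection.
Qed.

Lemma measure_prod3_swap12 (A : set ((X * X) * X)) : measurable A ->
  P3 (swap12 @^-1` A) = P3 A.
Proof.
move=> mA; have mA' : measurable (swap12 @^-1` A).
  by rewrite -[_ @^-1` _]setTI; exact: measurable_swap12.
(* after exchanging the two outer integrals both sides coincide *)
rewrite !measure_prod3E // (fubini_tonelli (mu \o xsection (swap12 @^-1` A))) //=;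
  exact (measurable_fun_xsection mu mA').
Qed.

Lemma measure_prod3_swap23 (A : set ((X * X) * X)) : measurable A ->
  P3 (swap23 @^-1` A) = P3 A.
Proof.
move=> mA; have mA' : measurable (swap23 @^-1` A).
  by rewrite -[_ @^-1` _]setTI; exact: measurable_swap23.
rewrite !measure_prod3E //; apply: eq_integral => x _.
transitivity (\int[mu]_y \int[mu]_z (\1_A ((x, z), y))%:E).
  by apply: eq_integral => y _; rewrite measure_xsection_indic.
rewrite (fubini_tonelli (fun yz => (\1_A ((x, yz.2), yz.1))%:E)) //=; last first.
  apply/measurable_EFinP; apply: measurableT_comp; first exact: measurable_indic.
  apply: measurable_fun_pair; last exact: measurable_fst.
  by apply: measurable_fun_pair; [exact: measurable_cst | exact: measurable_snd].
by apply: eq_integral => z _; rewrite measure_xsection_indic.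
Qed.

End triple_product.

Section ae_same.
Context d (X : measurableType d) (R : realType) (mu : {measure set X -> \bar R}).
Variable A : X -> set X.

(* The disjunct [x = z] makes the relation reflexive even where [A x] is
   null. *)
Definition ae_same x z := x = z \/
  ~ mu.-negligible (A x `&` A z) /\ mu.-negligible (A x `+` A z).

Lemma ae_same_refl x : ae_same x x. Proof. by left. Qed.

Lemma ae_same_sym x z : ae_same x z -> ae_same z x.
Proof. by move=> [->|]; [left | rewrite setIC setYC; right]. Qed.

Lemma ae_same_trans x y z : ae_same x y -> ae_same y z -> ae_same x z.
Proof.
move=> [->//|[Ixy Yxy]] [<-|[Iyz Yyz]]; first by right.
have Yxz : mu.-negligible (A x `+` A z).
  apply: negligibleS (negligibleU Yxy Yyz) => w /=.
  by have [Ay|nAy] := pselect (A y w); tauto.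
right; split=> // Ixz; apply: Ixy.
apply: negligibleS (negligibleU Ixz Yyz) => w /= [Axw Ayw].
by have [Az|nAz] := pselect (A z w); tauto.
Qed.

End ae_same.

Section ball.
Context d (X : measurableType d) (R : realType) (mu : probability X R).
Variable g : X * X -> R.
Hypothesis mg : measurable_fun setT g.
Local Notation P2 := (mu \x mu)%E.
Local Notation P3 := ((mu \x mu) \x mu)%E.

Definition ball (s : R) x := [set y | g (x, y) <= s].

Definition ball_equiv s := ae_same mu (ball s).

Lemma ball_nonnegligible s :
  {ae P2, forall p, g p <= s -> ~ mu.-negligible (ball s p.1)}.
Proof.
set G := [set p | g p <= s].
have mG : measurable G.
  rewrite (_ : G = g @^-1` `]-oo, s]); last by apply/seteqP; split=> p /=; rewrite in_itv.
  by rewrite -[_ @^-1` _]setTI; apply: mg => //; exact: measurable_itv.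
have ballE x : ball s x = xsection G x.
  by apply/seteqP; split=> y; rewrite /xsection /= inE.
have mball x : measurable (ball s x).
  by rewrite ballE; exact: measurable_xsection.
set Z := [set x | mu (ball s x) = 0%E].
have mZ : measurable Z.
  rewrite (_ : Z = (mu \o xsection G) @^-1` [set 0%E]); last first.
    by apply/seteqP; split=> x; rewrite /Z /= ballE.
  have mf := measurable_fun_xsection mu mG.
  by rewrite -[_ @^-1` _]setTI; apply: mf => //; exact: measurable_set1.
exists (G `&` (Z `*` setT)); split.
- by apply: measurableI => //; exact: measurableX.
-
  transitivity (\int[mu]_x mu (xsection (G `&` (Z `*` setT)) x))%E => //.
  apply: integral0_eq => x _.
  have mN : measurable (xsection (G `&` (Z `*` setT)) x).
    by apply: measurable_xsection; apply: measurableI => //; exact: measurableX.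
  have [Zx|nZx] := pselect (Z x).
    apply: (subset_measure0 mN (mball x) _ Zx).
    by move=> y; rewrite /xsection /ball /= inE => -[].
  rewrite (_ : xsection _ x = set0) ?measure0 //.
  by apply/seteqP; split=> y //; rewrite /xsection /= inE => -[_ []].
- move=> p /= /not_implyP[Gp Np]; split=> //; split=> //=.
  by apply/(negligibleP _ (mball _)); apply: contrapT.
Qed.

Variable rho : X -> X -> R.
Hypothesis rho_ge0 : forall x y, 0 <= rho x y.
Hypothesis rhoC : forall x y, rho x y = rho y x.
Hypothesis rho_xx : forall x, rho x x = 0.
Hypothesis rho_g : {ae P2, forall p, rho p.1 p.2 = g p}.
Hypothesis rho_ultra : {ae P3, forall t,
  rho t.1.1 t.2 <= Num.max (rho t.1.1 t.1.2) (rho t.1.2 t.2)}.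

Definition typical_triple x z y :=
  [/\ rho x y = g (x, y), rho z y = g (z, y),
      rho x y <= Num.max (rho x z) (rho z y),
      rho z y <= Num.max (rho z x) (rho x y) &
      rho x z <= Num.max (rho x y) (rho y z)].

Lemma ae_typical_triple : {ae P3, forall t, typical_triple t.1.1 t.1.2 t.2}.
Proof.
have swap12P := ae_preimage (@measurable_swap12 _ X) (measure_prod3_swap12 mu).
have swap23P := ae_preimage (@measurable_swap23 _ X) (measure_prod3_swap23 mu).
have rho_g13 := swap23P _ (ae_prod_fst mu rho_g).
have rho_g23 := swap12P _ rho_g13.
have rho_ultra213 := swap12P _ rho_ultra.
have rho_ultra132 := swap23P _ rho_ultra.
apply: filterS (filterI rho_g13 (filterI rho_g23
  (filterI rho_ultra (filterI rho_ultra213 rho_ultra132)))).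
by move=> t [? [? [? [? ?]]]]; split.
Qed.

Section pair.
Variables (x z : X) (s : R).
Hypothesis typical : {ae mu, forall y, typical_triple x z y}.

Lemma ball_equiv_of_le : ~ mu.-negligible (ball s x) -> rho x z <= s ->
  ball_equiv s x z.
Proof.
move=> Bx rxz; right.
have Yxz : mu.-negligible (ball s x `+` ball s z).
  apply: negligibleS typical => y /= + [gxy gzy Uxzy Uzxy _].
  rewrite /ball /= -gxy -gzy => -[] [le nle]; apply: nle.
  - by apply: le_trans Uzxy _; rewrite ge_max (rhoC z x) rxz le.
  - by apply: le_trans Uxzy _; rewrite ge_max rxz le.
split=> // Ixz; apply: Bx; apply: negligibleS (negligibleU Ixz Yxz) => y /= Bxy.
by have [Bzy|nBzy] := pselect (ball s z y); tauto.
Qed.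

Lemma le_of_ball_equiv : 0 <= s -> ball_equiv s x z -> rho x z <= s.
Proof.
move=> s0 [<-|[Ixz _]]; first by rewrite rho_xx.
rewrite leNgt; apply/negP => srxz; apply: Ixz.
apply: negligibleS typical => y /= [Bxy Bzy] [gxy gzy _ _ Uxyz].
move: (lt_le_trans srxz Uxyz); rewrite lt_max gxy (rhoC y z) gzy.
by rewrite !ltNge Bxy Bzy.
Qed.

End pair.

Lemma rho_le_iff_ball_equiv s : 0 <= s ->
  {ae P2, forall p, rho p.1 p.2 <= s <-> ball_equiv s p.1 p.2}.
Proof.
move=> s0; have typical := ae_prod_xsection ae_typical_triple.
apply: filterS (filterI rho_g (filterI (ball_nonnegligible s) typical)).
move=> [x z] /= [gxz [Bx typ]]; split=> [rxz|]; last exact: le_of_ball_equiv typ s0.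
have gxz_s : g (x, z) <= s by rewrite -gxz.
exact: ball_equiv_of_le typ (Bx gxz_s) rxz.
Qed.

Lemma ae_level_dist_ball : {ae P2, forall p,
  level_set ball_equiv p.1 p.2 !=set0 /\ level_dist ball_equiv p.1 p.2 = rho p.1 p.2}.
Proof.
have : {ae P2, forall p, forall q : rat, 0 <= ratr q :> R ->
    (rho p.1 p.2 <= ratr q <-> ball_equiv (ratr q) p.1 p.2)}.
  apply: ae_forall_countable => q; have [q0|nq0] := pselect (0 <= ratr q :> R).
    by apply: filterS (rho_le_iff_ball_equiv q0).
  by apply: aeW => p /nq0.
apply: filterS => -[x z] /= rho_q; split; last exact: level_dist_eq (rho_ge0 x z) rho_q.
by rewrite (level_set_eq (rho_ge0 x z) rho_q); exists (rho x z) => /=.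
Qed.

End ball.

Lemma probability_ae_exists d (T : measurableType d) (R : realType)
    (P : probability T R) (Q : T -> Prop) :
  {ae P, forall x, Q x} -> exists x, Q x.
Proof.
have P_pos : (0 < P setT)%E by rewrite probability_setT.
exact: @filter_ex _ _ (ae_properfilter_algebraOfSetsType P_pos) _.
Qed.

Theorem mainTheorem4 (d : measure_display) (X : measurableType d) (R : realType)
    (mu : probability X R) (rho : X -> X -> R) :
  continuous_lebesgue_space mu ->
  semimetric rho ->
  measurable_wrt (mu \x mu)%E (fun p : X * X => rho p.1 p.2) ->
  {ae ((mu \x mu) \x mu)%E, forall t : (X * X) * X,
     rho t.1.1 t.2 <= Num.max (rho t.1.1 t.1.2) (rho t.1.2 t.2)} ->
  exists rho' : X -> X -> R,
    ultrametric rho' /\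
    {ae (mu \x mu)%E, forall p : X * X, rho' p.1 p.2 = rho p.1 p.2}.
Proof.
move=> _ [rho_ge0 rhoC rho_xx _] [g [mg rho_g]] rho_ultra.
set E := ball_equiv mu g.
have rho_level : {ae (mu \x mu)%E, forall p,
    level_set E p.1 p.2 !=set0 /\ level_dist E p.1 p.2 = rho p.1 p.2}.
  exact: ae_level_dist_ball.
have fin : {ae (mu \x mu)%E, forall p, level_set E p.1 p.2 !=set0}.
  by apply: filterS rho_level => p [].
have [x0 fin_x0] := probability_ae_exists (ae_prod_xsection fin).
have [pi piE pi_ultra] := exists_level_dist_retract (E := E)
  (fun s => ae_same_refl _ _) (fun s => @ae_same_sym _ _ _ _ _)
  (fun s => @ae_same_trans _ _ _ _ _) x0.
exists (fun x z => level_dist E (pi x) (pi z)); split=> //.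
apply: filterS (filterI rho_level (filterI (ae_prod_fst mu fin_x0) (ae_prod_snd mu fin_x0))).
by move=> [x z] /= [[_ <-] [/piE -> /piE ->]].
Qed.
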